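(* Let $R$ be a ring and $S$ an $R$-module. The following are equivalent: (i) $S$ is flat over $R$; (ii) for every $R$-module $M$, property $(\#)$ holds for every finite family of submodules of $M$; (iii) property $(\#)$ holds for every finite family of submodules of $M = R^2$; (iv) for every $f \in R$, $\operatorname{Ann}_S(f) = (\operatorname{Ann}_R(f))S$, and property $(\#)$ holds for every finite family of ideals of $R$ (i.e., with $M = R$).
   Context: All rings are commutative with identity. For an $R$-module $S$, an $R$-module $M$ and a family $\{M_\lambda\}_{\lambda\in\Lambda}$ of submodules of $M$, property $(\#)$ is the equality $S \otimes_R \left(\bigcap_\lambda M_\lambda\right) = \bigcap_\lambda (S \otimes_R M_\lambda)$, where all modules are identified with their images in $S \otimes_R M$. When $M=R$ and $I$ is an ideal, $I \otimes_R S$ is identified with its image $IS$ in $S$. *)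

From HB Require Import structures.
From mathcomp Require Import all_boot all_order all_algebra.
Set Implicit Arguments. Unset Strict Implicit. Unset Printing Implicit Defensive.
Import GRing.Theory.
Local Open Scope ring_scope.

Definition is_submod (R : comPzRingType) (M : lmodType R) (N : M -> Prop) : Prop :=
  N 0 /\ (forall (a : R) (x y : M), N x -> N y -> N (a *: x + y)).

Definition is_ideal (R : comPzRingType) (I : R -> Prop) : Prop :=
  I 0 /\ (forall x y : R, I x -> I y -> I (x + y)) /\
  (forall a x : R, I x -> I (a * x)).

Definition bilinear_map (R : comPzRingType) (S M P : lmodType R)
    (b : S -> M -> P) : Prop :=
  (forall (a : R) s s' m, b (a *: s + s') m = a *: b s m + b s' m) /\
  (forall (a : R) s m m', b s (a *: m + m') = a *: b s m + b s m').

(* Tensors of S (x)_R M are represented by formal sums  sum_i s_i (x) m_i,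
   i.e. by lists of pairs; [tens_eq t1 t2] is equality in S (x)_R M,
   characterised by the universal property of the tensor product. *)
Definition tens_eval (R : comPzRingType) (S M P : lmodType R)
    (b : S -> M -> P) (t : seq (S * M)) : P :=
  \sum_(p <- t) b p.1 p.2.

Definition tens_eq (R : comPzRingType) (S M : lmodType R)
    (t1 t2 : seq (S * M)) : Prop :=
  forall (P : lmodType R) (b : S -> M -> P),
    bilinear_map b -> tens_eval b t1 = tens_eval b t2.

(* [t] lies in the image of S (x)_R N in S (x)_R M. *)
Definition in_tens_img (R : comPzRingType) (S M : lmodType R) (N : M -> Prop)
    (t : seq (S * M)) : Prop :=
  exists t' : seq (S * M), (forall p, p \in t' -> N p.2) /\ tens_eq t t'.

Definition sharp_prop (R : comPzRingType) (S M : lmodType R) (I : Type)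
    (Ms : I -> M -> Prop) : Prop :=
  forall t : seq (S * M),
    @in_tens_img R S M (fun m => forall i, Ms i m) t <->
    (forall i, @in_tens_img R S M (Ms i) t).

Definition flat (R : comPzRingType) (S : lmodType R) : Prop :=
  forall (N M : lmodType R) (f : {linear N -> M}), injective f ->
    forall t : seq (S * N),
      @tens_eq R S M [seq (p.1, f p.2) | p <- t] [::] -> @tens_eq R S N t [::].

Definition ideal_ext (R : comPzRingType) (S : lmodType R) (I : R -> Prop)
    (s : S) : Prop :=
  exists t : seq (R * S), (forall p, p \in t -> I p.1) /\
    s = \sum_(p <- t) p.1 *: p.2.

From HB Require Import structures.
From mathcomp Require Import all_boot all_order all_algebra.
From mathcomp Require Import boolp functions.
Set Implicit Arguments. Unset Strict Implicit. Unset Printing Implicit Defensive.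
Import GRing.Theory.
Local Open Scope ring_scope.
Local Open Scope quotient_scope.

(* All four conditions are linked through the equational criterion for
   flatness [trivial_relations]: every relation sum_i a_i s_i = 0 in S is
   trivial, i.e. s_i = sum_k beta_ki sigma_k with sum_i a_i beta_ki = 0 in R.
   S ⊗ M is presented as formal sums modulo the span of the formal tensors
   sum_j (r_j s) ⊗ m_j with sum_j r_j m_j = 0; the presentation is proved by
   building the quotient module.  Under the criterion, a certificate that two
   formal tensors agree can be rewritten, one generator at a time, so that it
   only involves elements of a prescribed submodule: this yields flatness and
   property (#).  Conversely, flatness applied to the inclusion of the ideal
   (a_1, ..., a_n) into R gives the criterion, and so does (iv), by induction on
   n, using (#) for the ideals (a_0) and (a_1, ..., a_n) and the annihilator of
   a_0.  Finally (iii) gives (iv) by testing (#) on the submodules R (1, f),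
   R x 0 and I x 0 of R^2. *)

Section Bilinear.
Variables (R : comPzRingType) (S M P : lmodType R) (b : S -> M -> P).
Hypothesis bil_b : bilinear_map b.

Lemma bilDl s s' m : b (s + s') m = b s m + b s' m.
Proof. by rewrite -{1}[s]scale1r bil_b.1 scale1r. Qed.
Lemma bilDr s m m' : b s (m + m') = b s m + b s m'.
Proof. by rewrite -{1}[m]scale1r bil_b.2 scale1r. Qed.
Lemma bil0l m : b 0 m = 0.
Proof. by apply: (addrI (b 0 m)); rewrite -bilDl !addr0. Qed.
Lemma bil0r s : b s 0 = 0.
Proof. by apply: (addrI (b s 0)); rewrite -bilDr !addr0. Qed.
Lemma bilZl a s m : b (a *: s) m = a *: b s m.
Proof. by rewrite -[a *: s]addr0 bil_b.1 bil0l addr0. Qed.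
Lemma bilZr a s m : b s (a *: m) = a *: b s m.
Proof. by rewrite -[a *: m]addr0 bil_b.2 bil0r addr0. Qed.

Lemma bil_suml (I : Type) (r : seq I) (F : I -> S) m :
  b (\sum_(i <- r) F i) m = \sum_(i <- r) b (F i) m.
Proof. exact: (big_morph (b^~ m) (fun s s' => bilDl s s' m) (bil0l m)). Qed.
Lemma bil_sumr (I : Type) (r : seq I) s (F : I -> M) :
  b s (\sum_(i <- r) F i) = \sum_(i <- r) b s (F i).
Proof. exact: (big_morph (b s) (bilDr s) (bil0r s)). Qed.

End Bilinear.

Section Submodule.
Variables (R : comPzRingType) (M : lmodType R) (B : M -> Prop).
Hypothesis subB : is_submod B.

Lemma submod0 : B 0.
Proof. exact: subB.1. Qed.

Lemma submodD x y : B x -> B y -> B (x + y).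
Proof. by move=> Bx By; rewrite -[x]scale1r; apply: subB.2. Qed.

Lemma submodZ a x : B x -> B (a *: x).
Proof. by move=> Bx; rewrite -[a *: x]addr0; apply: subB.2 Bx submod0. Qed.

Lemma submod_sum (I : Type) (r : seq I) (P : pred I) (F : I -> M) :
  (forall i, P i -> B (F i)) -> B (\sum_(i <- r | P i) F i).
Proof.
move=> BF; elim: r => [|i r IHr]; first by rewrite big_nil; apply: submod0.
by rewrite big_cons; case: ifP => // Pi; apply: submodD => //; apply: BF.
Qed.

End Submodule.

Lemma is_submod_cap (R : comPzRingType) (M : lmodType R) (I : Type)
    (P : I -> Prop) (Ms : I -> M -> Prop) :
  (forall i, is_submod (Ms i)) -> is_submod (fun m => forall i, P i -> Ms i m).
Proof.
move=> subMs; split=> [i _ | a x y Mx My i Pi]; first exact: submod0.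
by apply: (subMs i).2; [apply: Mx | apply: My].
Qed.

Lemma is_submod_eq0 (R : comPzRingType) (M : lmodType R) : is_submod (eq^~ (0 : M)).
Proof. by split=> // a x y -> ->; rewrite scaler0 addr0. Qed.

Section QuotientModule.
Variables (R : pzRingType) (V : lmodType R) (W : zmodClosed V).
Hypothesis scaleW : GRing.scaler_closed W.

(* The closure proof is a phantom argument of [quotmod] so that the module
   structure declared below can be found by unification. *)
Definition quotmod of GRing.scaler_closed W : Type := Quotient.quot W.
HB.instance Definition _ := ZmodQuotient.copy (quotmod scaleW) (Quotient.quot W).
Local Notation Q := (quotmod scaleW).

Lemma eqquot_subE (x y : V) : (\pi_Q x == \pi_Q y) = (x - y \in W).
Proof. by rewrite Quotient.idealrBE. Qed.

Definition quot_scale (a : R) : Q -> Q := lift_op1 Q ( *:%R a).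

Lemma pi_quot_scale a : {morph \pi_Q : x / a *: x >-> quot_scale a x}.
Proof.
move=> x; unlock quot_scale; apply/eqP.
by rewrite eqquot_subE -scalerBr scaleW // -eqquot_subE reprK.
Qed.
Canonical pi_quot_scale_morph a := PiMorph1 (pi_quot_scale a).

Lemma quot_scaleA a b q : quot_scale a (quot_scale b q) = quot_scale (a * b) q.
Proof. by elim/quotW: q => x; rewrite !piE scalerA. Qed.
Lemma quot_scale1 : left_id 1 quot_scale.
Proof. by elim/quotW => x; rewrite !piE scale1r. Qed.
Lemma quot_scaleDr : right_distributive quot_scale +%R.
Proof. by move=> a; elim/quotW => x; elim/quotW => y; rewrite !piE scalerDr. Qed.
Lemma quot_scaleDl q : {morph quot_scale^~ q : a b / a + b}.
Proof. by elim/quotW: q => x a b; rewrite !piE scalerDl. Qed.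

HB.instance Definition _ := GRing.Zmodule_isLmodule.Build R Q
  quot_scaleA quot_scale1 quot_scaleDr quot_scaleDl.

Lemma piZ a x : \pi_Q (a *: x) = a *: \pi_Q x.
Proof. exact: pi_quot_scale. Qed.

Lemma piD x y : \pi_Q (x + y) = \pi_Q x + \pi_Q y.
Proof. exact: raddfD. Qed.

Lemma pi_sum (I : Type) (r : seq I) (F : I -> V) :
  \pi_Q (\sum_(i <- r) F i) = \sum_(i <- r) \pi_Q (F i).
Proof. exact: raddf_sum. Qed.

End QuotientModule.

Section Kernel.
Variables (R : pzRingType) (V U : lmodType R) (phi : {linear V -> U}).

Definition kernel : {pred V} := [pred v | phi v == 0].

Lemma kernel_zmod_closed : zmod_closed kernel.
Proof.
by split=> [|x y]; rewrite !inE ?linear0 // linearB => /eqP-> /eqP->; rewrite subr0.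
Qed.
HB.instance Definition _ := GRing.isZmodClosed.Build V kernel kernel_zmod_closed.

Lemma kernel_scale_closed : GRing.scaler_closed kernel.
Proof. by move=> a x; rewrite !inE linearZZ => /eqP->; rewrite scaler0. Qed.

End Kernel.

Notation coimage phi := (quotmod (@kernel_scale_closed _ _ _ phi)).

Section KernelQuotient.
Variables (R : pzRingType) (V U : lmodType R) (phi : {linear V -> U}).

Definition coimage_lift (q : coimage phi) : U := phi (repr q).

Lemma coimage_eqE x y : (\pi_(coimage phi) x == \pi_(coimage phi) y) = (phi x == phi y).
Proof. by rewrite eqquot_subE inE linearB subr_eq0. Qed.

Lemma coimage_liftE v : coimage_lift (\pi_(coimage phi) v) = phi v.
Proof. by apply/eqP; rewrite -coimage_eqE reprK. Qed.

Lemma coimage_lift_is_linear : linear coimage_lift.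
Proof.
move=> a; elim/quotW => x; elim/quotW => y.
by rewrite -piZ -piD !coimage_liftE linearP.
Qed.
HB.instance Definition _ := GRing.isLinear.Build R (coimage phi) U _ coimage_lift
  coimage_lift_is_linear.

Lemma coimage_lift_inj : injective coimage_lift.
Proof.
elim/quotW => x; elim/quotW => y; rewrite !coimage_liftE => /eqP.
by rewrite -coimage_eqE => /eqP.
Qed.

End KernelQuotient.

Arguments coimage_lift : simpl never.

(** * A presentation of the tensor product *)

Section Relations.
Variables (R : comPzRingType) (M : lmodType R).
Implicit Types (rho : seq (R * M)) (m : M).

Definition relsum rho : M := \sum_(q <- rho) q.1 *: q.2.

Definition rel_coef rho m : R := \sum_(q <- rho | q.2 == m) q.1.

End Relations.

Section TensorPresentation.
Variables (R : comPzRingType) (S M : lmodType R).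
Implicit Types (t : seq (S * M)) (c : seq (S * seq (R * M))) (A : M -> Prop).

Definition tens_coef t : M -> S := fun m => \sum_(p <- t | p.2 == m) p.1.

(* [tens_expand c] is sum_{(s, rho) in c} s ⊗ relsum rho, expanded bilinearly. *)
Definition tens_expand c : seq (S * M) := [seq (q.1 *: p.1, q.2) | p <- c, q <- p.2].

Definition relsums_in (B : M -> Prop) c := forall p, p \in c -> B (relsum p.2).

Definition tens_null (f : M -> S) : Prop :=
  exists2 c, relsums_in (eq^~ 0) c & f = tens_coef (tens_expand c).

Lemma tens_expand_cons p c :
  tens_expand (p :: c) = [seq (q.1 *: p.1, q.2) | q <- p.2] ++ tens_expand c.
Proof. by []. Qed.

Lemma tens_expand_cat c1 c2 : tens_expand (c1 ++ c2) = tens_expand c1 ++ tens_expand c2.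
Proof. by elim: c1 => //= p c1 IHc; rewrite !tens_expand_cons IHc catA. Qed.

Lemma tens_coef_cat t1 t2 : tens_coef (t1 ++ t2) = tens_coef t1 + tens_coef t2.
Proof. by apply/funext => m; rewrite /tens_coef big_cat. Qed.

Lemma tens_coef_nil : tens_coef [::] = 0.
Proof. by apply/funext => m; rewrite /tens_coef big_nil. Qed.

Lemma tens_coefE t : tens_coef t = \sum_(p <- t) tens_coef [:: p].
Proof.
elim: t => [|p t IHt]; first by rewrite big_nil tens_coef_nil.
by rewrite big_cons -IHt -tens_coef_cat.
Qed.

Lemma tens_coef1D s s' m :
  tens_coef [:: (s + s', m)] = tens_coef [:: (s, m)] + tens_coef [:: (s', m)].
Proof.
rewrite -tens_coef_cat; apply/funext => x.
by rewrite /tens_coef !big_cons !big_nil /=; case: (m == x); rewrite ?addr0.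
Qed.

Lemma tens_coef1Z a s m : tens_coef [:: (a *: s, m)] = a *: tens_coef [:: (s, m)].
Proof.
rewrite scalrfctE; apply/funext => x; rewrite /tens_coef !big_cons !big_nil /=.
by case: (m == x); rewrite ?addr0 ?scaler0.
Qed.

Lemma tens_coef_expand c m :
  tens_coef (tens_expand c) m = \sum_(p <- c) rel_coef p.2 m *: p.1.
Proof.
elim: c => [|p c IHc]; first by rewrite /tens_coef !big_nil.
rewrite big_cons -IHc tens_expand_cons /tens_coef big_cat big_map /=.
by rewrite /rel_coef scaler_suml.
Qed.

Lemma sum_tens_coef_seq (V : zmodType) (h : S -> M -> V) t (L : seq M) :
  (forall m, {morph h^~ m : s s' / s + s'}) -> uniq L ->
  {subset [seq p.2 | p <- t] <= L} ->
  \sum_(p <- t) h p.1 p.2 = \sum_(m <- L) h (tens_coef t m) m.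
Proof.
move=> hD uL; have h0 m : h 0 m = 0 by apply: (addrI (h 0 m)); rewrite -hD !addr0.
elim: t => [|p t IHt] tL.
  by rewrite big_nil big1 // => m _; rewrite /tens_coef big_nil h0.
have pL : p.2 \in L by apply: tL; rewrite inE eqxx.
rewrite big_cons IHt => [|m tm]; last by apply: tL; rewrite inE tm orbT.
under [RHS]eq_bigr do rewrite -cat1s tens_coef_cat hD.
rewrite big_split /=; congr (_ + _).
rewrite (bigD1_seq p.2) //= /tens_coef !big_cons !big_nil eqxx addr0.
rewrite big1 ?addr0 // => m; rewrite eq_sym => /negPf pm.
by rewrite big_cons big_nil pm h0.
Qed.

Lemma sum_tens_coef (V : zmodType) (h : S -> M -> V) t1 t2 :
  (forall m, {morph h^~ m : s s' / s + s'}) -> tens_coef t1 = tens_coef t2 ->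
  \sum_(p <- t1) h p.1 p.2 = \sum_(p <- t2) h p.1 p.2.
Proof.
move=> hD e12; set L := undup [seq p.2 | p <- t1 ++ t2].
rewrite !(@sum_tens_coef_seq _ _ _ L) ?undup_uniq ?e12 // => m tm;
  by rewrite mem_undup map_cat mem_cat tm ?orbT.
Qed.

Lemma tens_eval_expand (P : lmodType R) (b : S -> M -> P) c : bilinear_map b ->
  tens_eval b (tens_expand c) = tens_eval b [seq (p.1, relsum p.2) | p <- c].
Proof.
move=> bil_b; elim: c => [|p c IHc]; first by rewrite /tens_eval !big_nil.
rewrite /tens_eval in IHc *; rewrite tens_expand_cons big_cat big_cons IHc big_map /=.
rewrite /relsum (bil_sumr bil_b); congr (_ + _).
by apply: eq_bigr => q _; rewrite (bilZr bil_b) (bilZl bil_b).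
Qed.

Lemma tens_coef_expandZ a c :
  tens_coef (tens_expand [seq (a *: p.1, p.2) | p <- c]) = a *: tens_coef (tens_expand c).
Proof.
rewrite scalrfctE; apply/funext => m; rewrite !tens_coef_expand big_map scaler_sumr.
by apply: eq_bigr => p _; rewrite scalerA mulrC -scalerA.
Qed.

Lemma tens_null0 : tens_null 0.
Proof. by exists [::]; rewrite ?tens_coef_nil. Qed.

Lemma tens_nullD f g : tens_null f -> tens_null g -> tens_null (f + g).
Proof.
move=> [c1 z1 ->] [c2 z2 ->]; exists (c1 ++ c2).
  by move=> p; rewrite mem_cat => /orP[]; [apply: z1 | apply: z2].
by rewrite tens_expand_cat tens_coef_cat.
Qed.

Lemma tens_nullZ a f : tens_null f -> tens_null (a *: f).
Proof.
move=> [c z ->]; exists [seq (a *: p.1, p.2) | p <- c]; last by rewrite tens_coef_expandZ.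
by move=> q /mapP[p cp ->]; apply: (z p cp).
Qed.

Definition tens_null_pred : {pred M -> S} := [pred f | `[< tens_null f >]].

Lemma tens_null_zmod_closed : zmod_closed tens_null_pred.
Proof.
split=> [|f g]; rewrite !inE; first exact/asboolP/tens_null0.
move=> /asboolP nf /asboolP ng; apply/asboolP.
by rewrite -scaleN1r; apply: tens_nullD nf (tens_nullZ _ ng).
Qed.
HB.instance Definition _ :=
  GRing.isZmodClosed.Build (M -> S) tens_null_pred tens_null_zmod_closed.

Lemma tens_null_scale_closed : GRing.scaler_closed tens_null_pred.
Proof. by move=> a f; rewrite !inE => /asboolP nf; apply/asboolP/tens_nullZ. Qed.

Local Notation tens_quot := (quotmod tens_null_scale_closed).

Definition tens_pure s m : tens_quot := \pi_tens_quot (tens_coef [:: (s, m)]).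

Lemma tens_eval_pure t : tens_eval tens_pure t = \pi_tens_quot (tens_coef t).
Proof. by rewrite tens_coefE pi_sum; apply: eq_bigr => -[s m]. Qed.

Lemma tens_pure_bilinear : bilinear_map tens_pure.
Proof.
split=> [a s s' m | a s m m'].
  by rewrite /tens_pure tens_coef1D tens_coef1Z piD piZ.
rewrite /tens_pure -piZ -piD; apply/eqP; rewrite eqquot_subE inE; apply/asboolP.
exists [:: (s, [:: (1, a *: m + m'); (- a, m); (-1, m')])].
  move=> p; rewrite inE => /eqP -> /=; rewrite /relsum !big_cons big_nil /=.
  by rewrite scale1r scaleNr scaleN1r addr0 -opprD subrr.
rewrite [RHS]tens_coefE /= !big_cons big_nil !tens_coef1Z scale1r scaleNr scaleN1r.
by rewrite addr0 opprD.
Qed.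

(* [tens_pure] is a universal bilinear map. *)
Theorem tens_eqP t1 t2 : tens_eq t1 t2 <-> tens_null (tens_coef t1 - tens_coef t2).
Proof.
split=> [e12 | [c z e] P b bil_b].
  have := e12 _ _ tens_pure_bilinear; rewrite !tens_eval_pure => /eqP.
  by rewrite eqquot_subE inE => /asboolP.
have e2 : tens_coef t1 = tens_coef (t2 ++ tens_expand c).
  by rewrite tens_coef_cat -e addrC subrK.
have -> : tens_eval b t1 = tens_eval b t2 + tens_eval b (tens_expand c).
  by rewrite /tens_eval -big_cat; apply: sum_tens_coef e2 => m s s'; apply: bilDl.
rewrite tens_eval_expand // [X in _ + X]big_map big1_seq ?addr0 // => p /andP[_ cp].
by rewrite /= (z p cp) (bil0r bil_b).
Qed.

Lemma tens_eq_sym t1 t2 : tens_eq t1 t2 -> tens_eq t2 t1.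
Proof. by move=> e12 P b bil_b; rewrite (e12 P b bil_b). Qed.

Lemma tens_eq_trans t1 t2 t3 : tens_eq t1 t2 -> tens_eq t2 t3 -> tens_eq t1 t3.
Proof. by move=> e12 e23 P b bil_b; rewrite (e12 P b bil_b) (e23 P b bil_b). Qed.

Lemma tens_eq_coef t1 t2 : tens_coef t1 = tens_coef t2 -> tens_eq t1 t2.
Proof. by move=> e12 P b bil_b; apply: sum_tens_coef e12 => m s s'; apply: bilDl. Qed.

Lemma in_tens_img_sub A A' t :
  (forall m, A m -> A' m) -> in_tens_img A t -> in_tens_img A' t.
Proof. by move=> AA' [t' [At' tt']]; exists t'; split=> // p /At' /AA'. Qed.

End TensorPresentation.

Lemma tens_coef_map (R : comPzRingType) (S M N : lmodType R) (g : M -> N)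
    (t : seq (S * M)) m n :
  {in [seq p.2 | p <- t], forall x, (g x == n) = (x == m)} ->
  tens_coef [seq (p.1, g p.2) | p <- t] n = tens_coef t m.
Proof.
move=> gE; rewrite /tens_coef big_map big_seq_cond [RHS]big_seq_cond.
by apply: eq_bigl => p /=; case tp: (p \in t); rewrite //= gE ?map_f.
Qed.

Lemma tens_expand_map (R : comPzRingType) (S M N : lmodType R) (g : M -> N)
    (c : seq (S * seq (R * M))) :
  tens_expand [seq (p.1, [seq (q.1, g q.2) | q <- p.2]) | p <- c] =
  [seq (p.1, g p.2) | p <- tens_expand c].
Proof. by elim: c => //= p c IHc; rewrite !tens_expand_cons IHc map_cat -!map_comp. Qed.

(** * The equational criterion for flatness *)

Section TrivialRelations.
Variables (R : comPzRingType) (S : lmodType R).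

Definition trivial_rel n (a : 'I_n -> R) (s : 'I_n -> S) : Prop :=
  exists2 ts : seq (S * {ffun 'I_n -> R}),
    forall p, p \in ts -> \sum_i a i * p.2 i = 0 &
    forall i, s i = \sum_(p <- ts) p.2 i *: p.1.

Definition trivial_relations : Prop :=
  forall n (a : 'I_n -> R) (s : 'I_n -> S), \sum_i a i *: s i = 0 -> trivial_rel a s.

End TrivialRelations.

Section TrivialRelClosure.
Variables (R : comPzRingType) (S : lmodType R) (n : nat) (a : 'I_n -> R).

Lemma trivial_rel_sum (X : eqType) (r : seq X) (sigma : X -> S) (beta : X -> 'I_n -> R)
    (s : 'I_n -> S) :
  {in r, forall x, \sum_i a i * beta x i = 0} ->
  (forall i, s i = \sum_(x <- r) beta x i *: sigma x) -> trivial_rel a s.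
Proof.
move=> rel_beta s_eq; exists [seq (sigma x, [ffun i => beta x i]) | x <- r].
  by move=> _ /mapP[x rx ->] /=; under eq_bigr do rewrite ffunE; apply: rel_beta.
by move=> i; rewrite s_eq big_map; apply: eq_bigr => x _; rewrite ffunE.
Qed.

Lemma trivial_relD (s1 s2 s : 'I_n -> S) :
  trivial_rel a s1 -> trivial_rel a s2 -> (forall i, s i = s1 i + s2 i) -> trivial_rel a s.
Proof.
move=> [ts1 rel1 s1E] [ts2 rel2 s2E] sE; exists (ts1 ++ ts2).
  by move=> p; rewrite mem_cat => /orP[/rel1 | /rel2].
by move=> i; rewrite sE s1E s2E big_cat.
Qed.

End TrivialRelClosure.

Section RelationSurgery.
Variables (R : comPzRingType) (M : lmodType R).
Implicit Types (rho : seq (R * M)) (y m : M).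

Definition rel_comb n (beta : 'I_n -> R) (rhos : 'I_n -> seq (R * M)) : seq (R * M) :=
  [seq (beta i * q.1, q.2) | i <- index_enum 'I_n, q <- rhos i].

Definition rel_drop y rho : seq (R * M) := [seq q <- rho | q.2 != y].

Lemma relsum_comb n beta rhos :
  relsum (@rel_comb n beta rhos) = \sum_i beta i *: relsum (rhos i).
Proof.
rewrite /relsum /rel_comb big_flatten big_map /=; apply: eq_bigr => i _; rewrite big_map.
by rewrite scaler_sumr; apply: eq_bigr => q _; rewrite scalerA.
Qed.

Lemma rel_coef_comb n beta rhos m :
  rel_coef (@rel_comb n beta rhos) m = \sum_i beta i * rel_coef (rhos i) m.
Proof.
rewrite /rel_coef /rel_comb big_flatten big_map /=; apply: eq_bigr => i _; rewrite big_map.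
by rewrite mulr_sumr big_mkcond; apply: eq_bigr => q _ /=; case: (q.2 == m); rewrite ?mulr0.
Qed.

Lemma relsum_drop y rho : relsum (rel_drop y rho) = relsum rho - rel_coef rho y *: y.
Proof.
have coef_y : \sum_(q <- rho | ~~ (q.2 != y)) q.1 *: q.2 = rel_coef rho y *: y.
  rewrite /rel_coef scaler_suml; apply: eq_big => q; rewrite negbK //.
  by move=> /eqP ->.
by rewrite /relsum /rel_drop big_filter [in RHS](bigID (fun q => q.2 != y)) /= coef_y addrK.
Qed.

Lemma rel_coef_drop y rho m :
  rel_coef (rel_drop y rho) m = if m == y then 0 else rel_coef rho m.
Proof.
rewrite /rel_coef /rel_drop big_filter_cond; case: eqP => [->|/eqP my].
  by rewrite big_pred0 // => q; case: eqP.
by apply: eq_bigl => q /=; case: (eqVneq q.2 m) => [->|_]; rewrite ?my ?andbF ?andbT.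
Qed.

End RelationSurgery.

Section Elimination.
Variables (R : comPzRingType) (S M : lmodType R).
Hypothesis relS : trivial_relations S.
Variable B : M -> Prop.
Hypothesis subB : is_submod B.
Implicit Types (c : seq (S * seq (R * M))).

Definition family_supp c : seq M := [seq q.2 | p <- c, q <- p.2].

(* At [y] the family gives the relation sum_p rel_coef p.2 y * p.1 = 0 in S;
   rewriting the p.1 along a trivialization of it cancels [y] everywhere. *)
Lemma eliminate_one c y :
  relsums_in B c -> tens_coef (tens_expand c) y = 0 ->
  exists2 c', relsums_in B c' &
    tens_coef (tens_expand c') = tens_coef (tens_expand c) /\
    {subset family_supp c' <= [predD1 family_supp c & y]}.
Proof.
move=> Bc coef_y; pose cc (i : 'I_(size c)) := nth (0, [::]) c i.
have cc_in i : cc i \in c by apply: mem_nth.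
have sum_c (V : zmodType) (F : S * seq (R * M) -> V) :
    \sum_(p <- c) F p = \sum_i F (cc i).
  by rewrite (big_nth (0, [::])) big_mkord.
pose rhos i := (cc i).2.
have rel_y : \sum_i rel_coef (rhos i) y *: (cc i).1 = 0.
  by rewrite -[RHS]coef_y tens_coef_expand (sum_c _ (fun p => rel_coef p.2 y *: p.1)).
have [ts ts_rel ts_s] := relS rel_y.
exists [seq (p.1, rel_drop y (rel_comb (fun i => p.2 i) rhos))
          | p : S * {ffun 'I_(size c) -> R} <- ts]; [|split].
- move=> _ /mapP[p tsp ->] /=; rewrite relsum_drop relsum_comb rel_coef_comb.
  have -> : \sum_i p.2 i * rel_coef (rhos i) y = 0.
    by under eq_bigr do rewrite mulrC; apply: ts_rel.
  rewrite scale0r subr0; apply: (submod_sum subB) => i _; apply: (submodZ subB).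
  exact: Bc (cc_in i).
- apply/funext => m; rewrite !tens_coef_expand big_map.
  rewrite (sum_c _ (fun p => rel_coef p.2 m *: p.1)) /=.
  under eq_bigr do rewrite rel_coef_drop.
  case: eqP => [->|_]; first by rewrite rel_y big1 // => p _; rewrite scale0r.
  under eq_bigr do rewrite rel_coef_comb scaler_suml.
  rewrite exchange_big /=; apply: eq_bigr => i _; rewrite ts_s scaler_sumr.
  by apply: eq_bigr => p _; rewrite !scalerA mulrC.
- move=> x /allpairsPdep[_ [q [/mapP[p tsp ->] /=]]].
  rewrite mem_filter => /andP[qy /allpairsPdep[i [q' [_ q'_rho q_eq]]]] ->.
  by rewrite inE qy q_eq /=; apply/allpairsPdep; exists (cc i), q'.
Qed.

Lemma eliminate (G : M -> Prop) c :
  relsums_in B c -> (forall m, ~ G m -> tens_coef (tens_expand c) m = 0) ->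
  exists2 c', relsums_in B c' &
    tens_coef (tens_expand c') = tens_coef (tens_expand c) /\
    (forall m, m \in family_supp c' -> G m).
Proof.
move=> Bc coef_G.
suff elim_L : forall (L : seq M) c', relsums_in B c' ->
    tens_coef (tens_expand c') = tens_coef (tens_expand c) ->
    (forall m, m \in family_supp c' -> G m \/ m \in L) ->
  exists2 c'', relsums_in B c'' &
    tens_coef (tens_expand c'') = tens_coef (tens_expand c) /\
    (forall m, m \in family_supp c'' -> G m).
  by apply: (elim_L (family_supp c) c Bc erefl) => m cm; right.
elim=> [|y L IHL] c' Bc' coef_c' GL.
  by exists c' => //; split=> // m /GL[].
have [Gy | nGy] := pselect (G y).
  apply: IHL Bc' coef_c' _ => m /GL[Gm|]; first by left.
  by rewrite inE => /orP[/eqP->|]; [left | right].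
have [|c'' Bc'' [coef_c'' supp_c'']] := eliminate_one Bc' (y := y).
  by rewrite coef_c'; exact: coef_G.
apply: IHL Bc'' (etrans coef_c'' coef_c') _ => m /supp_c''.
by rewrite inE => /andP[my /GL[Gm|]]; [left | rewrite inE (negPf my); right].
Qed.

End Elimination.

Section FromTrivialRelations.
Variables (R : comPzRingType) (S : lmodType R).
Hypothesis relS : trivial_relations S.

(* Eliminate from the certificate everything outside the image of f, then pull
   it back along f. *)
Lemma flat_of_trivial_relations : flat S.
Proof.
move=> N M f f_inj t /tens_eqP; rewrite tens_coef_nil subr0 => -[c Zc coef_c].
have [|c' Zc' [coef_c' supp_c']] :=
  eliminate relS (@is_submod_eq0 _ M) (G := fun m => exists n, m = f n) Zc.
  move=> m not_im; rewrite -coef_c /tens_coef big1_seq // => p /andP[/eqP pm].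
  by case/mapP=> q _ pq; case: not_im; exists q.2; rewrite -pm pq.
have [g gK] : exists g : M -> N, forall n, g (f n) = n.
  exists (fun m => if pselect (exists n, f n = m) is left e then projT1 (cid e) else 0).
  move=> n; case: pselect => [e | []]; last by exists n.
  by case: (cid e) => n' /= /f_inj.
have fgK m : m \in family_supp c' -> f (g m) = m by move=> /supp_c'[n ->]; rewrite gK.
apply/tens_eqP; rewrite tens_coef_nil subr0.
exists [seq (p.1, [seq (q.1, g q.2) | q <- p.2]) | p <- c'].
  move=> _ /mapP[p c'p ->]; apply: f_inj.
  rewrite linear0 -(Zc' p c'p) /relsum linear_sum big_map.
  by apply: eq_big_seq => q qp; rewrite linearZ fgK //; apply/allpairsPdep; exists p, q.
apply/funext => n; rewrite tens_expand_map.
rewrite -(@tens_coef_map _ _ _ _ f _ _ (f n)) => [|x _]; last exact: inj_eq.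
rewrite coef_c -coef_c' (@tens_coef_map _ _ _ _ g _ (f n)) // => x.
by rewrite map_allpairs => /fgK <-; rewrite gK (inj_eq f_inj).
Qed.

(* The certificate of tA = tB, with the pairs of tB read as relations in B, is
   a B-family with the coefficients of tA; eliminating from it everything
   outside A leaves a tensor with entries in A and B. *)
Lemma in_tens_imgI (M : lmodType R) (A B : M -> Prop) (t : seq (S * M)) :
  is_submod A -> is_submod B -> in_tens_img A t -> in_tens_img B t ->
  in_tens_img (fun m => A m /\ B m) t.
Proof.
move=> subA subB [tA [tAA ttA]] [tB [tBB ttB]].
have /tens_eqP[c Zc coef_c] := tens_eq_trans (tens_eq_sym ttA) ttB.
pose cB := [seq (p.1, [:: (1, p.2)]) | p <- tB] ++ c.
have coef_cB : tens_coef (tens_expand cB) = tens_coef tA.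
  rewrite /cB tens_expand_cat tens_coef_cat -coef_c.
  have -> : tens_expand [seq (p.1, [:: (1, p.2)]) | p <- tB] = tB.
    clear cB; elim: tB {tBB ttB coef_c} => //= -[s m] tB IHtB.
    by rewrite tens_expand_cons IHtB /= scale1r.
  by rewrite addrC subrK.
have [||c' Bc' [coef_c' supp_c']] := eliminate relS subB (G := A) (c := cB).
- move=> q; rewrite mem_cat => /orP[/mapP[p tBp ->] | cq].
    by rewrite /relsum big_cons big_nil scale1r addr0; apply: tBB.
  by rewrite (Zc _ cq); apply: submod0.
- move=> m Am; rewrite coef_cB /tens_coef big1_seq // => p /andP[/eqP pm tAp].
  by case: Am; rewrite -pm; apply: tAA.
exists [seq (p.1, relsum p.2) | p <- c']; split.
  move=> _ /mapP[p c'p ->]; split; last exact: Bc'.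
  rewrite /relsum big_seq; apply: (submod_sum subA) => q qp; apply: (submodZ subA).
  by apply: supp_c'; apply/allpairsPdep; exists p, q.
apply: (tens_eq_trans ttA).
apply: (tens_eq_trans (tens_eq_coef (esym (etrans coef_c' coef_cB)))).
by move=> P b bil_b; apply: tens_eval_expand.
Qed.

Lemma sharp_prop_of_trivial_relations (M : lmodType R) (I : finType)
    (Ms : I -> M -> Prop) :
  (forall i, is_submod (Ms i)) -> sharp_prop S Ms.
Proof.
move=> subMs t; split=> [tI i | tMs]; first by apply: in_tens_img_sub tI => m; apply.
suff : in_tens_img (fun m => forall i, i \in enum I -> Ms i m) t.
  by apply: in_tens_img_sub => m Mm i; apply: Mm; rewrite mem_enum.
elim: (enum I) => [|i l IHl]; first by exists t; split=> // p _ i; rewrite in_nil.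
have := in_tens_imgI (subMs i) (is_submod_cap (fun j => j \in l) subMs) (tMs i) IHl.
by apply: in_tens_img_sub => m [Mi Ml] j; rewrite inE => /orP[/eqP-> | /Ml].
Qed.

End FromTrivialRelations.

Section FlatTrivialRelations.
Variables (R : comPzRingType) (S : lmodType R) (n : nat) (a : 'I_n -> R).

Definition lincomb (x : {ffun 'I_n -> R^o}) : R^o := \sum_i a i * x i.

Lemma lincomb_is_linear : linear lincomb.
Proof.
move=> r x y; rewrite /lincomb scaler_sumr -big_split; apply: eq_bigr => i _ /=.
by rewrite !ffunE mulrDr mulrCA.
Qed.
HB.instance Definition _ :=
  GRing.isLinear.Build R {ffun 'I_n -> R^o} R^o _ lincomb lincomb_is_linear.

Definition unit_vec (i : 'I_n) : {ffun 'I_n -> R^o} := [ffun j => (j == i)%:R].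

Lemma lincomb_unit_vec i : lincomb (unit_vec i) = a i.
Proof.
rewrite /lincomb (bigD1 i) //= ffunE eqxx mulr1 big1 ?addr0 // => j /negPf ji.
by rewrite ffunE ji mulr0.
Qed.

Local Notation N := (coimage lincomb).

(* The coimage of [lincomb] is the ideal generated by the a_i.  Flatness
   applied to its inclusion into R makes sum_i s_i ⊗ a_i vanish already over
   the ideal, and lifting the certificate to R^n along [repr] trivializes the
   relation. *)
Lemma trivial_rel_of_flat (s : 'I_n -> S) :
  flat S -> \sum_i a i *: s i = 0 -> trivial_rel a s.
Proof.
move=> flatS rel_s; pose t := [seq (s i, \pi_N (unit_vec i)) | i <- index_enum 'I_n].
have /(flatS _ _ _ (@coimage_lift_inj _ _ _ lincomb))/tens_eqP : tens_eq
    [seq (p.1, coimage_lift p.2) | p <- t] [::].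
  move=> P b bil_b; rewrite /tens_eval big_nil -map_comp big_map /=.
  under eq_bigr do rewrite coimage_liftE /= lincomb_unit_vec -[a _]mulr1
    -/(a _ *: (1 : R^o)) (bilZr bil_b) -(bilZl bil_b).
  by rewrite -(bil_suml bil_b) rel_s (bil0l bil_b).
rewrite tens_coef_nil subr0 => -[c Zc coef_c].
pose k i : {ffun 'I_n -> R^o} := repr (\pi_N (unit_vec i)) - unit_vec i.
pose beta (rho : seq (R * N)) : {ffun 'I_n -> R^o} := \sum_(q <- rho) q.1 *: repr q.2.
have key j : s j + \sum_i k i j *: s i = \sum_(p <- c) beta p.2 j *: p.1.
  (* [h] is additive in [u] but, [repr] not being linear, not bilinear. *)
  pose h (u : S) (x : N) : {ffun 'I_n -> S} := [ffun j => repr x j *: u].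
  have hD x : {morph h^~ x : u v / u + v}.
    by move=> u v; apply/ffunP => i; rewrite !ffunE scalerDr.
  have := congr1 (fun F : {ffun 'I_n -> S} => F j) (sum_tens_coef hD coef_c).
  rewrite /t big_map /tens_expand big_flatten big_map !sum_ffunE /= => E.
  transitivity (\sum_i h (s i) (\pi_N (unit_vec i)) j).
    rewrite [in RHS](eq_bigr (fun i => k i j *: s i + unit_vec i j *: s i)) => [|i _];
      last by rewrite ffunE -[repr _](subrK (unit_vec i)) ffunE scalerDl.
    rewrite big_split addrC /=; congr (_ + _).
    rewrite (bigD1 j) //= ffunE eqxx scale1r big1 ?addr0 // => i.
    by rewrite eq_sym ffunE => /negPf ->; rewrite scale0r.
  rewrite E; apply: eq_bigr => p _; rewrite big_map sum_ffunE /beta sum_ffunE scaler_suml.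
  by apply: eq_bigr => q _; rewrite !ffunE scalerA mulrC.
apply: (trivial_relD (s1 := fun j => \sum_(p <- c) beta p.2 j *: p.1)
                     (s2 := fun j => \sum_i k i j *: - s i)).
- apply: (trivial_rel_sum (sigma := fst) (beta := fun p j => beta p.2 j)) => // p cp.
  transitivity (coimage_lift (relsum p.2)); last by rewrite (Zc p cp) linear0.
  rewrite -[LHS]/(lincomb (beta p.2)) /beta /relsum !linear_sum.
  by apply: eq_bigr => q _; rewrite !linearZ.
- apply: (trivial_rel_sum (sigma := fun i => - s i) (beta := fun i j => k i j)) => // i _.
  rewrite -[LHS]/(lincomb (k i)) linearB /= -[lincomb (repr _)]/(coimage_lift _).
  by rewrite coimage_liftE /= lincomb_unit_vec subrr.
- by move=> j /=; rewrite -key; under eq_bigr do rewrite scalerN; rewrite sumrN addrK.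
Qed.

End FlatTrivialRelations.

Lemma trivial_relations_of_flat (R : comPzRingType) (S : lmodType R) :
  flat S -> trivial_relations S.
Proof. by move=> flatS n a s; apply: trivial_rel_of_flat. Qed.

(** * The ideal criterion *)

Lemma ideal_ext_sub (R : comPzRingType) (S : lmodType R) (I I' : R -> Prop) (s : S) :
  (forall x, I x -> I' x) -> ideal_ext I s -> ideal_ext I' s.
Proof. by move=> II' [l [Il ->]]; exists l; split=> // p /Il /II'. Qed.

Lemma scale_ideal_ext_ann (R : comPzRingType) (S : lmodType R) (f : R) (s : S) :
  ideal_ext (fun a => a * f = 0) s -> f *: s = 0.
Proof.
move=> [l [l_ann ->]]; rewrite scaler_sumr big1_seq // => p /andP[_ lp].
by rewrite scalerA mulrC l_ann ?scale0r.
Qed.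

Section IdealSpan.
Variables (R : comPzRingType) (n : nat) (a : 'I_n -> R).

Definition ideal_span : R -> Prop := fun x => exists g : 'I_n -> R, x = \sum_i g i * a i.

Lemma is_ideal_span : is_ideal ideal_span.
Proof.
split; [|split].
- by exists (fun _ => 0); rewrite big1 // => i _; rewrite mul0r.
- move=> _ _ [g1 ->] [g2 ->]; exists (fun i => g1 i + g2 i).
  by rewrite -big_split; apply: eq_bigr => i _; rewrite mulrDl.
- move=> r _ [g ->]; exists (fun i => r * g i).
  by rewrite mulr_sumr; apply: eq_bigr => i _; rewrite mulrA.
Qed.

Lemma ideal_span_choice :
  exists g : R -> 'I_n -> R, forall x, ideal_span x -> x = \sum_i g x i * a i.
Proof.
have [g gE] : {g : R -> 'I_n -> R & forall x, ideal_span x -> x = \sum_i g x i * a i}.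
  apply: (boolp.choice (P := fun x g => ideal_span x -> x = \sum_i g i * a i)) => x.
  by have [[g xE] | nx] := pselect (ideal_span x); [exists g | exists (fun _ => 0)].
by exists g.
Qed.

Lemma ideal_ext_span (S : lmodType R) (s : 'I_n -> S) :
  ideal_ext ideal_span (\sum_i a i *: s i).
Proof.
exists [seq (a i, s i) | i <- index_enum 'I_n]; split; last by rewrite big_map.
move=> _ /mapP[i _ ->]; exists (fun j => (j == i)%:R).
by rewrite (bigD1 i) //= eqxx mul1r big1 ?addr0 // => j /negPf ->; rewrite mul0r.
Qed.

End IdealSpan.

Definition vcons (T : Type) n (x0 : T) (f : 'I_n -> T) : 'I_n.+1 -> T :=
  fun k => if unlift ord0 k is Some i then f i else x0.

Lemma vcons0 (T : Type) n (x0 : T) (f : 'I_n -> T) : vcons x0 f ord0 = x0.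
Proof. by rewrite /vcons unlift_none. Qed.

Lemma vconsS (T : Type) n (x0 : T) (f : 'I_n -> T) i : vcons x0 f (lift ord0 i) = f i.
Proof. by rewrite /vcons liftK. Qed.

Section IdealCriterion.
Variables (R : comPzRingType) (S : lmodType R).
Hypothesis annS :
  forall (f : R) (s : S), f *: s = 0 -> ideal_ext (fun a : R => a * f = 0) s.
Hypothesis capS : forall (I : finType) (Is : I -> R -> Prop),
  (forall i, is_ideal (Is i)) ->
  forall s : S, (forall i, ideal_ext (Is i) s) -> ideal_ext (fun a => forall i, Is i a) s.

Section Step.
Variables (n : nat) (a : 'I_n.+1 -> R).
Local Notation a' := (fun i : 'I_n => a (lift ord0 i)).

Lemma sum_vcons (x0 : R) (beta : 'I_n -> R) :
  \sum_k a k * vcons x0 beta k = a ord0 * x0 + \sum_i a' i * beta i.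
Proof. by rewrite big_ord_recl vcons0; under eq_bigr do rewrite vconsS. Qed.

Lemma trivial_rel_head (w : S) : a ord0 *: w = 0 -> trivial_rel a (vcons w (fun _ => 0)).
Proof.
move=> /annS[l [l_ann wE]].
apply: (trivial_rel_sum (r := l) (sigma := snd)
         (beta := fun p => vcons p.1 (fun _ => 0))).
  move=> p lp.
  rewrite sum_vcons big1 => [|i _]; last exact: mulr0.
  by rewrite addr0 mulrC (l_ann p lp).
move=> k; case: (unliftP ord0 k) => [i|] -> /=.
  by rewrite vconsS big1 // => p _; rewrite vconsS scale0r.
by rewrite vcons0 wE; under [RHS]eq_bigr do rewrite vcons0.
Qed.

Lemma trivial_rel_tail (s' : 'I_n -> S) : trivial_rel a' s' -> trivial_rel a (vcons 0 s').
Proof.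
move=> [ts ts_rel s'E].
apply: (trivial_rel_sum (r := ts) (sigma := fst)
         (beta := fun p => vcons 0 (fun i => p.2 i))).
  by move=> p tp; rewrite sum_vcons mulr0 add0r; apply: ts_rel.
move=> k; case: (unliftP ord0 k) => [i|] -> /=.
  by rewrite vconsS s'E; under eq_bigr do rewrite vconsS.
by rewrite vcons0 big1 // => p _; rewrite vcons0 scale0r.
Qed.

Lemma trivial_rel_split (r : 'I_n.+1 -> S) :
  a ord0 *: r ord0 = 0 -> trivial_rel a' (fun i => r (lift ord0 i)) -> trivial_rel a r.
Proof.
move=> /trivial_rel_head head /trivial_rel_tail tail; apply: trivial_relD head tail _ => k.
by case: (unliftP ord0 k) => [i|] -> /=; rewrite ?vcons0 ?vconsS ?add0r ?addr0.
Qed.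

(* v = sum_i a'_i s'_i = - a_0 s_0 lies in (a') S and in (a_0) S, hence in
   ((a') ∩ (a_0)) S; subtracting the trivial relations this provides leaves a
   head killed by a_0 and a tail that is a relation for a'. *)
Lemma trivial_rel_step (s : 'I_n.+1 -> S) :
  (forall s' : 'I_n -> S, \sum_i a' i *: s' i = 0 -> trivial_rel a' s') ->
  \sum_k a k *: s k = 0 -> trivial_rel a s.
Proof.
move=> IH; rewrite big_ord_recl => /eqP; rewrite addrC addr_eq0 => /eqP vE.
set v := \sum_i _ in vE.
pose Is (b : bool) := if b then ideal_span a' else ideal_span (fun _ : 'I_1 => a ord0).
have [L [L_cap vL]] : ideal_ext (fun x => forall b, Is b x) v.
  apply: capS => -[]; rewrite /Is; try exact: is_ideal_span; first exact: ideal_ext_span.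
  move: (ideal_ext_span (fun _ : 'I_1 => a ord0) (fun _ => - s ord0)).
  by rewrite big_ord1 scalerN vE.
have [g gE] := ideal_span_choice a'.
have [d dE] := ideal_span_choice (fun _ : 'I_1 => a ord0).
have dE' p : p \in L -> p.1 = d p.1 ord0 * a ord0.
  by move=> Lp; rewrite [LHS](dE _ (L_cap p Lp false)) big_ord1.
pose beta (p : R * S) := vcons (- d p.1 ord0) (g p.1).
pose rest k := s k - \sum_(p <- L) beta p k *: p.2.
apply: (trivial_relD (s1 := fun k => \sum_(p <- L) beta p k *: p.2) (s2 := rest)).
- apply: (trivial_rel_sum (r := L) (sigma := snd) (beta := beta)) => // p Lp.
  rewrite sum_vcons mulrN mulrC -dE' //.
  rewrite [X in - _ + X](eq_bigr _ (fun i _ => mulrC _ _)) -gE ?addNr //.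
  exact: L_cap Lp true.
- apply: trivial_rel_split.
    rewrite /rest /beta; under eq_bigr do rewrite vcons0 scaleNr.
    rewrite sumrN opprK scalerDr scaler_sumr (eq_big_seq (fun p => p.1 *: p.2)) => [|p Lp].
      by rewrite -vL vE addrN.
    by rewrite scalerA mulrC -dE'.
  apply: IH; rewrite /rest; under eq_bigr do rewrite scalerBr scaler_sumr.
  rewrite sumrB exchange_big /= -/v [X in _ - X](eq_big_seq (fun p => p.1 *: p.2)).
    by rewrite -vL subrr.
  move=> p Lp.
  rewrite [in RHS](gE _ (L_cap p Lp true)) scaler_suml; apply: eq_bigr => i _.
  by rewrite /beta vconsS scalerA mulrC.
- by move=> k; rewrite addrC subrK.
Qed.

End Step.

Lemma trivial_relations_of_ideal_criterion : trivial_relations S.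
Proof.
elim=> [|n IHn] a s rel_s; first by exists [::] => // -[].
exact: trivial_rel_step (IHn _) rel_s.
Qed.

End IdealCriterion.

(** * Property (#) in R^2 *)

Section PlaneSubmodules.
Variables (R : comPzRingType) (S : lmodType R).
Hypothesis sharp2 : forall (I : finType) (Ms : I -> 'rV[R]_2 -> Prop),
  (forall i, is_submod (Ms i)) -> sharp_prop S Ms.

Definition vec2 (x y : R) : 'rV[R]_2 := \row_j (if j == ord0 then x else y).

Lemma vec2_0 x y : vec2 x y ord0 ord0 = x.
Proof. by rewrite mxE. Qed.

Lemma vec2_1 x y : vec2 x y ord0 ord_max = y.
Proof. by rewrite mxE. Qed.

Lemma vec2Z c x y : c *: vec2 x y = vec2 (c * x) (c * y).
Proof. by apply/matrixP => i j; rewrite !mxE; case: ifP. Qed.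

Lemma vec2D x y x' y' : vec2 x y + vec2 x' y' = vec2 (x + x') (y + y').
Proof. by apply/matrixP => i j; rewrite !mxE; case: ifP. Qed.

Definition first_coord_scale (s : S) (v : 'rV[R]_2) : S := v ord0 ord0 *: s.

Lemma first_coord_scale_bilinear : bilinear_map first_coord_scale.
Proof.
split=> a s s' v; first by rewrite /first_coord_scale scalerDr !scalerA mulrC.
by rewrite /first_coord_scale !mxE scalerDl scalerA.
Qed.

Lemma ideal_ext_of_tens_eq (I : R -> Prop) (s : S) (t : seq (S * 'rV[R]_2)) :
  tens_eq [:: (s, vec2 1 0)] t -> (forall p, p \in t -> I (p.2 ord0 ord0)) ->
  ideal_ext I s.
Proof.
move=> st tI; exists [seq ((p.2 : 'rV_2) ord0 ord0, p.1) | p <- t]; split.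
  by move=> _ /mapP[p tp ->]; apply: tI.
have := st S _ first_coord_scale_bilinear.
by rewrite /tens_eval big_cons big_nil addr0 /first_coord_scale vec2_0 scale1r big_map.
Qed.

(* If f s = 0 then s ⊗ (1, 0) = s ⊗ (1, f) comes from both R (1, f) and
   R x 0, whose intersection is Ann(f) x 0. *)
Lemma ideal_ext_ann_of_sharp (f : R) (s : S) :
  f *: s = 0 -> ideal_ext (fun a => a * f = 0) s.
Proof.
move=> fs0.
pose Ms (b : bool) (v : 'rV[R]_2) : Prop :=
  if b then exists r, v = vec2 r (r * f) else v ord0 ord_max = 0.
have subMs b : is_submod (Ms b).
  case: b; split.
  - by exists 0; rewrite mul0r; apply/matrixP => i j; rewrite !mxE; case: ifP.
  - by move=> a _ _ [r1 ->] [r2 ->]; exists (a * r1 + r2); rewrite vec2Z vec2D mulrDl mulrA.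
  - by rewrite /Ms mxE.
  - by move=> a x y /= x0 y0; rewrite !mxE x0 y0 mulr0 addr0.
have [_ /(_ _)[b|t [tM st]]] := sharp2 subMs [:: (s, vec2 1 0)].
- case: b; last first.
    by exists [:: (s, vec2 1 0)]; split=> // p; rewrite inE => /eqP -> /=; rewrite vec2_1.
  exists [:: (s, vec2 1 f)]; split.
    by move=> p; rewrite inE => /eqP -> /=; exists 1; rewrite mul1r.
  move=> P b bil_b; rewrite /tens_eval !big_cons !big_nil !addr0 /=.
  have -> : vec2 1 0 = vec2 1 f + (- f) *: vec2 0 1.
    by rewrite vec2Z vec2D mulr0 mulr1 addr0 addrN.
  rewrite (bilDr bil_b) (bilZr bil_b) -(bilZl bil_b) scaleNr fs0 oppr0.
  by rewrite (bil0l bil_b) addr0.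
apply: (ideal_ext_of_tens_eq st) => p tp.
have [[r pr] p1] := (tM p tp true, tM p tp false).
by move: p1; rewrite /= pr vec2_0 vec2_1.
Qed.

Lemma ideal_ext_cap_of_sharp (I : finType) (Is : I -> R -> Prop) (s : S) :
  (forall i, is_ideal (Is i)) -> (forall i, ideal_ext (Is i) s) ->
  ideal_ext (fun a => forall i, Is i a) s.
Proof.
move=> idealIs sI.
pose Ms i (v : 'rV[R]_2) : Prop := Is i (v ord0 ord0) /\ v ord0 ord_max = 0.
have subMs i : is_submod (Ms i).
  have [I0 [ID IM]] := idealIs i; split; first by rewrite /Ms !mxE.
  move=> a x y [x1 x2] [y1 y2]; rewrite /Ms !mxE x2 y2 mulr0 addr0.
  by split=> //; apply: ID (IM _ _ x1) y1.
have [_ /(_ _)[i|t [tM st]]] := sharp2 subMs [:: (s, vec2 1 0)].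
  have [l [lI ->]] := sI i; exists [seq (p.2, vec2 p.1 0) | p <- l]; split.
    by move=> _ /mapP[p lp ->]; rewrite /Ms /= vec2_0 vec2_1; split=> //; apply: lI.
  move=> P b bil_b; rewrite /tens_eval big_cons big_nil addr0 big_map /= (bil_suml bil_b).
  by apply: eq_bigr => p _; rewrite (bilZl bil_b) -(bilZr bil_b) vec2Z mulr1 mulr0.
by apply: (ideal_ext_of_tens_eq st) => p tp i; case: (tM p tp i).
Qed.

End PlaneSubmodules.

Unset Implicit Arguments.

Theorem proposition5p5 (R : comPzRingType) (S : lmodType R) :
  [<-> flat S;
       forall (M : lmodType R) (I : finType) (Ms : I -> M -> Prop),
         (forall i, is_submod (Ms i)) -> sharp_prop S Ms;
       forall (I : finType) (Ms : I -> 'rV[R]_2 -> Prop),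
         (forall i, is_submod (Ms i)) -> sharp_prop S Ms;
       (forall (f : R) (s : S), f *: s = 0 <-> ideal_ext (fun a : R => a * f = 0) s) /\
       (forall (I : finType) (Is : I -> R -> Prop),
          (forall i, is_ideal (Is i)) ->
          forall s : S,
            ideal_ext (fun a => forall i, Is i a) s <-> (forall i, ideal_ext (Is i) s))].
Proof.
tfae.
- move=> /trivial_relations_of_flat relS M I Ms.
  exact: sharp_prop_of_trivial_relations.
- by move=> sharpS I Ms; apply: sharpS.
- move=> sharp2; split=> [f s | I Is idealIs s]; split.
  + exact: ideal_ext_ann_of_sharp.
  + exact: scale_ideal_ext_ann.
  + by move=> sI i; apply: ideal_ext_sub sI => x; apply.
  + exact: ideal_ext_cap_of_sharp.
- case=> annS capS; apply/flat_of_trivial_relations/trivial_relations_of_ideal_criterion.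
  + by move=> f s /annS.
  + by move=> I Is idealIs s /(capS I Is idealIs s).
Qed.
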